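(* Let $r \ge 1$, and for $i=1,\dots,r$ let $a_i = n_i\sigma_i > 0$ and $s_i \ge 0$ be the current sample size of stratum $i$. Let $Q[1..r]$ be an array of triples $(x,y,z)$ with $Q[i]$ initialized to $(i,\, n_i\sigma_i,\, s_i/(n_i\sigma_i))$, and then sorted in ascending order of the $z$ component (ties broken arbitrarily). Let $M > 0$ be any memory budget. If at least one stratum is not oversized under budget $M$, then the set of strata that are not oversized under budget $M$ is exactly $\{Q[1].x, Q[2].x, \dots, Q[p].x\}$ for some $p \in \{1,\dots,r\}$, i.e. it occupies a contiguous prefix of the sorted array $Q$.
   Context: Under a memory budget $M$, the Neyman allocation size of stratum $i$ is $M_i = M\cdot n_i\sigma_i/\sum_{j=1}^r n_j\sigma_j$. Stratum $i$ (with current sample size $s_i$) is called oversized under budget $M$ if $s_i > M_i$, and not oversized otherwise. *)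

From mathcomp Require Import all_boot all_order all_algebra.
Set Implicit Arguments. Unset Strict Implicit. Unset Printing Implicit Defensive.
Import Order.TTheory GRing.Theory Num.Theory.
Local Open Scope ring_scope.

(* Strata are indexed by 'I_r; nn i = n_i (stratum size), sigma i = sigma_i,
   s i = current sample size of stratum i. *)

Definition neyman (R : realFieldType) (r : nat) (nn : 'I_r -> nat)
  (sigma : 'I_r -> R) (M : R) (i : 'I_r) : R :=
  M * ((nn i)%:R * sigma i) / \sum_(j < r) (nn j)%:R * sigma j.

Definition oversized (R : realFieldType) (r : nat) (nn : 'I_r -> nat)
  (sigma : 'I_r -> R) (s : 'I_r -> R) (M : R) (i : 'I_r) : bool :=
  neyman nn sigma M i < s i.

Definition Q_init (R : realFieldType) (r : nat) (nn : 'I_r -> nat)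
  (sigma : 'I_r -> R) (s : 'I_r -> R) : seq ('I_r * R * R) :=
  [seq (i, (nn i)%:R * sigma i, s i / ((nn i)%:R * sigma i)) | i <- enum 'I_r].

Definition z_le (R : realFieldType) (r : nat) (u v : 'I_r * R * R) : bool :=
  u.2 <= v.2.

(* A stratum i is oversized iff its key z_i = s_i / (n_i sigma_i) exceeds the
   threshold M / sum_j n_j sigma_j, so the strata that are not oversized are
   those whose key lies below a fixed threshold.  In an array sorted by key
   these form a prefix, which is nonempty by hypothesis. *)
From mathcomp Require Import all_boot all_order all_algebra.
Import Order.TTheory GRing.Theory Num.Theory.
Local Open Scope ring_scope.

Lemma take_count_sorted (T : eqType) (e : rel T) (P : pred T) (s : seq T) :
  transitive e -> (forall u v, e u v -> P v -> P u) ->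
  sorted e s -> take (count P s) s = filter P s.
Proof.
move=> e_trans P_downward; elim: s => [|x s IHs] //= x_s_sorted.
case Px: (P x) => /=; first by rewrite IHs // (path_sorted x_s_sorted).
have noP_s : ~~ has P s.
  apply/hasPn => y y_s; apply: contraFN Px; apply: P_downward.
  exact: (allP (order_path_min e_trans x_s_sorted)).
move: (noP_s); rewrite has_count lt0n negbK => /eqP ->.
by move: noP_s; rewrite has_filter negbK => /eqP ->.
Qed.

Section Strata.

Variables (R : realFieldType) (r : nat) (nn : 'I_r -> nat).
Variables (sigma s : 'I_r -> R).

Let weight i := (nn i)%:R * sigma i.

Definition Q_entry (i : 'I_r) : 'I_r * R * R := (i, weight i, s i / weight i).

Lemma labels_filter_Q_init (P : pred ('I_r * R * R)) :
  [seq u.1.1 | u <- filter P (Q_init nn sigma s)] =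
  [seq i <- enum 'I_r | P (Q_entry i)].
Proof. by rewrite /Q_init filter_map -map_comp map_id_in. Qed.

Lemma not_oversizedE (M : R) (i : 'I_r) : 0 < weight i ->
  ~~ oversized nn sigma s M i = (s i / weight i <= M / \sum_(j < r) weight j).
Proof. by move=> weight_gt0; rewrite /oversized /neyman -leNgt ler_pdivrMr // mulrAC. Qed.

End Strata.

Theorem lemma4 (R : realFieldType) (r : nat) (nn : 'I_r -> nat)
  (sigma : 'I_r -> R) (s : 'I_r -> R) (M : R)
  (Q : seq ('I_r * R * R)) :
  (0 < r)%N ->
  (forall i, 0 < (nn i)%:R * sigma i) ->
  (forall i, 0 <= s i) ->
  perm_eq Q (Q_init nn sigma s) ->
  sorted (@z_le R r) Q ->
  0 < M ->
  (exists i, ~~ oversized nn sigma s M i) ->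
  exists2 p : nat, (0 < p <= r)%N &
    forall i : 'I_r,
      (~~ oversized nn sigma s M i) = (i \in [seq u.1.1 | u <- take p Q]).
Proof.
move=> _ weight_gt0 _ QE Q_sorted _ [i0 i0_small].
pose below (u : 'I_r * R * R) := u.2 <= M / \sum_(j < r) (nn j)%:R * sigma j.
have smallE i : ~~ oversized nn sigma s M i =
    (i \in [seq u.1.1 | u <- filter below Q]).
  by rewrite (perm_mem (perm_map _ (perm_filter _ QE))) labels_filter_Q_init
    mem_filter mem_enum andbT not_oversizedE.
have below_prefix : take (count below Q) Q = filter below Q.
  apply: take_count_sorted Q_sorted => [y x z|u v]; exact: le_trans.
exists (count below Q); last by move=> i; rewrite below_prefix smallE.
apply/andP; split.
  rewrite -has_count has_filter; apply: contraTneq (i0_small) => noQ.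
  by rewrite smallE noQ.
by rewrite (leq_trans (count_size _ _)) // (perm_size QE) size_map size_enum_ord.
Qed.
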